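(* Let $\eta(z)=q^{1/24}\prod_{n\ge1}(1-q^n)$, $q=e^{2\pi i z}$, and for $n\in\mathbb N_0$ let $r(n):=\#\{(n_1,\dots,n_5)\in\mathbb Z^5: n_1^2+n_2^2+2n_3^2+2n_4^2+2n_5^2=n\}$. Then, with all sums over $n\in\mathbb N_0$ in the indicated residue classes, \begin{multline*} \frac{\eta(z)^4\eta(2z)^4}{\eta(4z)^3}=-\sum_{n\equiv1\ (4)}r(n)q^n+\sum_{n\equiv3\ (4)}r(n)q^n-\frac15\sum_{n\equiv2\ (16)}r(n)q^n-\frac15\sum_{n\equiv4\ (16)}r(n)q^n+\frac15\sum_{n\equiv6\ (16)}r(n)q^n\\ -\frac37\sum_{n\equiv10\ (16)}r(n)q^n-\frac15\sum_{n\equiv12\ (16)}r(n)q^n+\frac15\sum_{n\equiv14\ (16)}r(n)q^n+\frac15\sum_{n\equiv0\ (8)}\left(r(n)+4r\left(\tfrac n4\right)\right)q^n. \end{multline*} *)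

From mathcomp Require Import all_boot all_order all_algebra.
Set Implicit Arguments. Unset Strict Implicit. Unset Printing Implicit Defensive.
Import Order.TTheory GRing.Theory Num.Theory.
Local Open Scope ring_scope.

Definition quadQ (a b c d e : int) : int :=
  a ^+ 2 + b ^+ 2 + 2 * c ^+ 2 + 2 * d ^+ 2 + 2 * e ^+ 2.

Definition box (n : nat) : seq int := [seq (i%:Z - n%:Z) | i <- iota 0 (2 * n).+1].

(* r(n) = #{(n1,..,n5) in Z^5 : quadQ n1 .. n5 = n}  (restricted to the box
   [-n,n]^5, which contains all solutions). *)
Definition r (n : nat) : nat :=
  (\sum_(a <- box n) \sum_(b <- box n) \sum_(c <- box n) \sum_(d <- box n)
     \sum_(e <- box n) (quadQ a b c d e == n%:Z : nat))%N.

(* Truncation of eta(z)^4 eta(2z)^4 / eta(4z)^3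
   = prod_{n>=1} (1-q^n)^4 (1-q^{2n})^4 (1-q^{4n})^{-3}   (q-power: (4+8-12)/24 = 0)
   which agrees with the infinite product in all coefficients of q^k, k <= N;
   1/(1-x) is expanded as the geometric series. *)
Definition eta_quot_trunc (N : nat) : {poly rat} :=
  \prod_(1 <= n < N.+1)
    ((1 - 'X^n) ^+ 4 * (1 - 'X^(2 * n)) ^+ 4
      * (\sum_(k < N.+1) 'X^(4 * n * k)) ^+ 3).

Definition eta_quot_coef (N : nat) : rat := (eta_quot_trunc N)`_N.

Definition rhs_coef (N : nat) : rat :=
  if (N %% 4 == 1)%N then - (r N)%:R
  else if (N %% 4 == 3)%N then (r N)%:R
  else if (N %% 16 == 2)%N then - (1 / 5) * (r N)%:R
  else if (N %% 16 == 4)%N then - (1 / 5) * (r N)%:R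
  else if (N %% 16 == 6)%N then (1 / 5) * (r N)%:R
  else if (N %% 16 == 10)%N then - (3 / 7) * (r N)%:R
  else if (N %% 16 == 12)%N then - (1 / 5) * (r N)%:R
  else if (N %% 16 == 14)%N then (1 / 5) * (r N)%:R
  else if (N %% 8 == 0)%N then (1 / 5) * ((r N)%:R + 4 * (r (N %/ 4))%:R)
  else 0.

From mathcomp Require Import all_boot all_order all_algebra.
From mathcomp Require Import ring zify.
From Stdlib Require Import Setoid Morphisms.
Set Implicit Arguments. Unset Strict Implicit. Unset Printing Implicit Defensive.
Import Order.TTheory GRing.Theory Num.Theory.
Local Open Scope ring_scope.

(* Jacobi's triple product gives theta(-q) = (q^2;q^2) (q;q^2)^2 for
   theta(q) = sum_(n in Z) q^(n^2); hence the eta quotient is theta(-q)^2 theta(-q^2)^3, while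
   sum_n r(n) q^n = theta(q)^2 theta(q^2)^3.  Split theta = E + O according to the parity of n:
   E lives on exponents = 0 (mod 4), O on exponents = 1 (mod 8), and theta(-q) = E - O.  At odd
   exponents n the two series therefore agree up to the sign (-1)^((n+1)/2).  The product
   formula also yields theta(q) theta(-q) = theta(-q^2)^2, i.e. E^2 = E(q^2)^2 + O(q^2)^2 and
   O^2 = 2 E(q^2) O(q^2).  This reduces both coefficients at 2m to coefficients of theta^5 and
   theta^2 theta(-q)^3 at m, where only the monomials E^a O^b with b = m (mod 4) contribute; it
   also gives [O^5]_m = 2 [E^4 O]_m for m = 5 (mod 8), and [E^5]_m = r(m/2) for 4 | m since
   E(q) = theta(q^4).  Everything is proved for truncations, comparing coefficients up to q^N. *)

Section TruncatedSeries.
Context {R : comNzRingType}.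
Implicit Types p q : {poly R}.

(* Congruence modulo X^(n+1).  It is a [Variant] so that [rewrite] treats it as a setoid
   relation instead of unfolding it into equations between coefficients. *)
Variant eq_upto (n : nat) p q : Prop :=
  EqUpto of forall i, (i <= n)%N -> p`_i = q`_i.

Lemma eq_upto_coef n p q i : eq_upto n p q -> (i <= n)%N -> p`_i = q`_i.
Proof. by case=> pq; apply: pq. Qed.

#[global] Instance eq_upto_Equivalence n : Equivalence (eq_upto n).
Proof.
split=> [p|p q [pq]|p q s [pq] [qs]]; constructor=> // i le_in; first by rewrite pq.
by rewrite pq // qs.
Qed.

#[global] Instance eq_upto_add n :
  Proper (eq_upto n ==> eq_upto n ==> eq_upto n) (@GRing.add {poly R}).
Proof. by move=> p p' [pp'] q q' [qq']; constructor=> i le_in; rewrite !coefD pp' // qq'. Qed.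

#[global] Instance eq_upto_opp n : Proper (eq_upto n ==> eq_upto n) (@GRing.opp {poly R}).
Proof. by move=> p p' [pp']; constructor=> i le_in; rewrite !coefN pp'. Qed.

#[global] Instance eq_upto_mul n :
  Proper (eq_upto n ==> eq_upto n ==> eq_upto n) (@GRing.mul {poly R}).
Proof.
move=> p p' [pp'] q q' [qq']; constructor=> i le_in; rewrite !coefM.
apply: eq_bigr => j _; rewrite pp' ?qq' ?(leq_trans (leq_subr _ _)) //.
by rewrite -ltnS (leq_trans (ltn_ord j)).
Qed.

#[global] Instance eq_upto_exp n : Proper (eq_upto n ==> eq ==> eq_upto n) (@GRing.exp {poly R}).
Proof.
move=> p p' pp' k _ <-; elim: k => [|k IHk]; first by rewrite !expr0.
by rewrite !exprS; apply: eq_upto_mul.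
Qed.

#[global] Instance eq_upto_natmul n :
  Proper (eq_upto n ==> eq ==> eq_upto n) (@GRing.natmul {poly R}).
Proof. by move=> p p' [pp'] k _ <-; constructor=> i le_in; rewrite !coefMn pp'. Qed.

Lemma eq_eq_upto n p q : p = q -> eq_upto n p q.
Proof. by move->. Qed.

Lemma eq_upto_le m n p q : (m <= n)%N -> eq_upto n p q -> eq_upto m p q.
Proof. by move=> le_mn [pq]; constructor=> i le_im; apply/pq/(leq_trans le_im). Qed.

Lemma eq_upto_prod n (I : Type) (s : seq I) (F G : I -> {poly R}) :
  (forall i, eq_upto n (F i) (G i)) ->
  eq_upto n (\prod_(i <- s) F i) (\prod_(i <- s) G i).
Proof. by move=> FG; elim: s => [|i s IHs]; rewrite ?big_nil // !big_cons FG IHs. Qed.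

Lemma eq_upto_sum n (I : eqType) (s : seq I) (F G : I -> {poly R}) :
  (forall i, i \in s -> eq_upto n (F i) (G i)) ->
  eq_upto n (\sum_(i <- s) F i) (\sum_(i <- s) G i).
Proof.
elim: s => [|i s IHs] FG; rewrite ?big_nil // !big_cons FG ?mem_head // IHs //.
by move=> j js; apply: FG; rewrite in_cons js orbT.
Qed.

Lemma eq_upto_comp_Xn n d p q :
  (0 < d)%N -> eq_upto n p q -> eq_upto n (p \Po 'X^d) (q \Po 'X^d).
Proof.
move=> d_gt0 [pq]; constructor=> i le_in; rewrite !coef_comp_poly_Xn //.
by case: ifP => // _; rewrite pq // (leq_trans (leq_div _ _)).
Qed.

Lemma eq_upto_mulXn n a p q : eq_upto n p q -> eq_upto (n + a) ('X^a * p) ('X^a * q).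
Proof.
by move=> [pq]; constructor=> i le_i; rewrite !coefXnM; case: ltnP => // le_ai; apply: pq; lia.
Qed.

Lemma eq_upto_Xn0 n a : (n < a)%N -> eq_upto n 'X^a 0.
Proof.
by move=> lt_na; constructor=> i le_in; rewrite coefXn coef0 ltn_eqF // (leq_ltn_trans le_in).
Qed.

Lemma eq_upto_1subXn n a : (n < a)%N -> eq_upto n (1 - 'X^a) 1.
Proof. by move=> lt_na; rewrite eq_upto_Xn0 // subr0. Qed.

Lemma eq_upto_mulI n (f : {poly R}) p q :
  f`_0 = 1 -> eq_upto n (f * p) (f * q) -> eq_upto n p q.
Proof.
move=> f0 [fpq]; constructor=> i; elim/ltn_ind: i => i IHi le_in.
apply/eqP; rewrite -subr_eq0 -coefB; move/eqP: (fpq i le_in).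
rewrite -subr_eq0 -coefB -mulrBr coefMr.
rewrite big_ord_recr /= subnn f0 mul1r big1 ?add0r // => j _.
by rewrite coefB IHi ?subrr ?mulr0 // (leq_trans _ le_in) // ltnW.
Qed.

Lemma coef_compN p i : (p \Po - 'X)`_i = (-1) ^+ i * p`_i.
Proof.
move: i; elim/poly_ind: p => [|p c IHp] i; first by rewrite comp_poly0 !coef0 mulr0.
rewrite comp_poly_MXaddC mulrN !coefD coefN !coefMX !coefC.
case: i => [|i] /=; first by rewrite oppr0 !add0r expr0 mul1r.
by rewrite !addr0 IHp exprS mulN1r mulNr.
Qed.

Lemma eq_upto_compN n p q : eq_upto n p q -> eq_upto n (p \Po - 'X) (q \Po - 'X).
Proof. by move=> [pq]; constructor=> i le_in; rewrite !coef_compN pq. Qed.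

#[global] Instance eq_upto_comp_XSn n d :
  Proper (eq_upto n ==> eq_upto n) (comp_poly ('X^(d.+1) : {poly R})).
Proof. by move=> p q; apply: eq_upto_comp_Xn. Qed.

End TruncatedSeries.

Section SupportModulo.
Context {R : comNzRingType}.
Implicit Types p q : {poly R}.

Definition supp_mod (d c : nat) p := forall i, (i != c %[mod d])%N -> p`_i = 0.

Lemma supp_mod0 d c : supp_mod d c 0.
Proof. by move=> i _; rewrite coef0. Qed.

Lemma supp_modD d c p q : supp_mod d c p -> supp_mod d c q -> supp_mod d c (p + q).
Proof. by move=> sp sq i ic; rewrite coefD sp // sq // addr0. Qed.

Lemma supp_modN d c p : supp_mod d c p -> supp_mod d c (- p).
Proof. by move=> sp i ic; rewrite coefN sp // oppr0. Qed.

Lemma supp_modB d c p q : supp_mod d c p -> supp_mod d c q -> supp_mod d c (p - q).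
Proof. by move=> sp sq; apply/supp_modD/supp_modN. Qed.

Lemma supp_modMn d c p k : supp_mod d c p -> supp_mod d c (p *+ k).
Proof. by move=> sp i ic; rewrite coefMn sp // mul0rn. Qed.

Lemma supp_mod_sum d c (I : Type) (s : seq I) (P : pred I) (F : I -> {poly R}) :
  (forall i, P i -> supp_mod d c (F i)) -> supp_mod d c (\sum_(i <- s | P i) F i).
Proof.
by move=> sF; elim/big_rec: _ => [|i p Pi sp]; [exact: supp_mod0 | apply: supp_modD; auto].
Qed.

Lemma supp_modXn d c k : (k = c %[mod d])%N -> supp_mod d c 'X^k.
Proof. by move=> kc i ic; rewrite coefXn; case: eqP => // ik; rewrite ik kc eqxx in ic. Qed.

Lemma supp_modM d a b p q :
  supp_mod d a p -> supp_mod d b q -> supp_mod d (a + b) (p * q).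
Proof.
move=> sp sq i iab; rewrite coefM big1 // => j _.
have le_ji : (j <= i)%N by rewrite -ltnS.
have [ja|] := eqVneq (j %% d)%N (a %% d)%N; last by move/sp => ->; rewrite mul0r.
have [ijb|] := eqVneq ((i - j) %% d)%N (b %% d)%N; last by move/sq => ->; rewrite mulr0.
by move: iab; rewrite -modnDm -ja -ijb modnDm subnKC // eqxx.
Qed.

Lemma supp_modX k d a p : supp_mod d a p -> supp_mod d (k * a) (p ^+ k).
Proof.
move=> sp; elim: k => [|k IHk]; first by rewrite expr0 -(expr0 'X); apply: supp_modXn.
by rewrite exprS mulSn; apply: supp_modM.
Qed.

Lemma supp_mod_dvd d e c p : (e %| d)%N -> supp_mod d c p -> supp_mod e c p.
Proof.
move=> ed sp i ic; apply: sp; apply: contra ic => /eqP icd.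
by rewrite -(modn_dvdm i ed) icd modn_dvdm.
Qed.

Lemma supp_mod_comp_Xn k d c p :
  (0 < k)%N -> supp_mod d c p -> supp_mod (k * d) (k * c) (p \Po 'X^k).
Proof.
move=> k_gt0 sp i ic; rewrite coef_comp_poly_Xn //; case: ifP => // /dvdnP[j ij].
rewrite ij mulnK //; apply: sp; apply: contra ic => /eqP jc.
by rewrite ij mulnC -!muln_modr jc.
Qed.

Lemma supp_mod_comp_Xn0 k p : (0 < k)%N -> supp_mod k 0 (p \Po 'X^k).
Proof.
move=> k_gt0 i ik; rewrite coef_comp_poly_Xn //; case: ifP => // /dvdnP[j ij].
by rewrite ij modnMl mod0n eqxx in ik.
Qed.

Lemma eq_upto_supp_mod n d c c' p1 p2 q1 q2 : (c != c' %[mod d])%N ->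
  supp_mod d c p1 -> supp_mod d c q1 -> supp_mod d c' p2 -> supp_mod d c' q2 ->
  eq_upto n (p1 + p2) (q1 + q2) -> eq_upto n p1 q1 /\ eq_upto n p2 q2.
Proof.
move=> cc' sp1 sq1 sp2 sq2 [pq]; split; constructor=> i le_in; move: (pq i le_in); rewrite !coefD.
  have [ic|ic] := eqVneq (i %% d)%N (c %% d)%N; last by rewrite sp1 ?sq1.
  by rewrite sp2 ?sq2 ?addr0 // ic.
have [ic|ic] := eqVneq (i %% d)%N (c' %% d)%N; last by rewrite sp2 ?sq2 ?addr0.
by rewrite sp1 ?sq1 ?add0r // ic eq_sym.
Qed.

End SupportModulo.

Arguments supp_modX {R} k [d a p].

Section GaussianBinomial.
Context {R : comNzRingType}.
Implicit Types q y z : R.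

Fixpoint gauss_binom q (m k : nat) : R :=
  match m, k with
  | _, 0 => 1
  | 0, _.+1 => 0
  | m.+1, k.+1 => gauss_binom q m k + q ^+ k.+1 * gauss_binom q m k.+1
  end.

Definition qpoch q n := \prod_(i < n) (1 - q ^+ i.+1).

Definition qpoch_odd q n := \prod_(i < n) (1 - q ^+ i.*2.+1).

Lemma qpochS q n : qpoch q n.+1 = qpoch q n * (1 - q ^+ n.+1).
Proof. by rewrite /qpoch big_ord_recr. Qed.

Lemma gauss_binom0 q m : gauss_binom q m 0 = 1.
Proof. by case: m. Qed.

Lemma gauss_binom_gt q m k : (m < k)%N -> gauss_binom q m k = 0.
Proof. by elim: m k => [|m IHm] [|k] //= lt_mk; rewrite !IHm ?mulr0 ?addr0 // ltnW. Qed.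

Lemma qpoch_gauss_binom q m k :
  (k <= m)%N -> qpoch q k * qpoch q (m - k) * gauss_binom q m k = qpoch q m.
Proof.
elim: m k => [|m IHm] [|k] // le_km.
- by rewrite /qpoch big_ord0 !mulr1.
- by rewrite subn0 gauss_binom0 /qpoch big_ord0 mul1r mulr1.
rewrite /= subSS mulrDr.
have -> : qpoch q k.+1 * qpoch q (m - k) * gauss_binom q m k = qpoch q m * (1 - q ^+ k.+1).
  by rewrite qpochS -(IHm k) //; ring.
have [->|lt_km] : k = m \/ (k < m)%N by lia.
  by rewrite gauss_binom_gt // !mulr0 addr0 qpochS.
have mk : (m - k = (m - k.+1).+1)%N by rewrite subnSK.
have -> : qpoch q (m - k) = qpoch q (m - k.+1) * (1 - q ^+ (m - k)) by rewrite mk qpochS -mk.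
rewrite [qpoch q m.+1]qpochS -(IHm k.+1) // !qpochS.
have -> : (m.+1 = (m - k) + k.+1)%N by rewrite addnS subnK // ltnW.
rewrite exprD; ring.
Qed.

Theorem q_binomial q y z m :
  \prod_(i < m) (y - z * q ^+ i) =
  \sum_(0 <= k < m.+1) (-1) ^+ k * q ^+ 'C(k, 2) * z ^+ k * y ^+ (m - k) * gauss_binom q m k.
Proof.
elim: m z => [|m IHm] z; first by rewrite big_ord0 big_nat1 /= !mulr1.
rewrite big_ord_recl /= expr0 mulr1.
under eq_bigr do rewrite exprS mulrA.
rewrite IHm [in RHS]big_nat_recl //= expr0 !mul1r subn0.
under [X in _ = _ + X]eq_bigr do rewrite subSS /= mulrDr.
rewrite big_split /= mulrBl [X in _ = _ + X]addrC addrA; congr (_ + _); last first.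
  rewrite mulr_sumr -sumrN; apply: eq_bigr => k _.
  rewrite binS bin1 !exprS exprD exprMn; ring.
rewrite big_nat_recl //= expr0 !mul1r subn0 mulr1 mulrDr gauss_binom0 mulr1 -exprS.
rewrite [in RHS]big_nat_recr //= gauss_binom_gt // !mulr0 addr0 mulr_sumr.
congr (_ + _); apply: eq_big_nat => k /andP[_ lt_km].
by rewrite -(subnSK lt_km) [y ^+ _.+1]exprS exprMn; ring.
Qed.

Lemma qpoch_double q n : qpoch q (2 * n) = qpoch (q ^+ 2) n * qpoch_odd q n.
Proof.
elim: n => [|n IHn]; first by rewrite /qpoch /qpoch_odd !big_ord0 mulr1.
by rewrite mulnS !qpochS IHn /qpoch_odd big_ord_recr /= -exprM !mul2n doubleS; ring.
Qed.

Lemma qpoch_oddN q n : qpoch_odd q n * qpoch_odd (- q) n = qpoch_odd (q ^+ 2) n.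
Proof.
rewrite /qpoch_odd -big_split; apply: eq_bigr => i _ /=.
by rewrite exprNn -signr_odd /= odd_double expr1 -exprM mulnC exprM; ring.
Qed.

End GaussianBinomial.

Lemma sum_odd_nat n : (\sum_(i < n) i.*2.+1 = n ^ 2)%N.
Proof. by elim: n => [|n IHn]; rewrite ?big_ord0 // big_ord_recr /= IHn; nia. Qed.

Lemma sqrn_bin2 k : (k ^ 2 = 2 * 'C(k, 2) + k)%N.
Proof. by elim: k => // k IHk; rewrite binS bin1; nia. Qed.

Lemma jacobi_exponent n k : (k <= 2 * n)%N ->
  (2 * 'C(k, 2) + k + 2 * n * (2 * n - k) = 3 * n ^ 2 + `|k - n| ^ 2)%N.
Proof.
rewrite -sqrn_bin2 => le_k2n; have [le_kn|le_nk] := leqP k n.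
  have [d nE] : exists d, n = (k + d)%N by exists (n - k)%N; lia.
  subst n.
  rewrite distnEr ?leq_addr // addKn.
  have -> : (2 * (k + d) - k = k + 2 * d)%N by lia.
  nia.
have [d kE] : exists d, k = (n + d)%N by exists (k - n)%N; lia.
subst k; have [e ne] : exists e, n = (d + e)%N by exists (n - d)%N; lia.
rewrite distnEl ?leq_addr // addKn.
have -> : (2 * n - (n + d) = e)%N by lia.
rewrite ne; nia.
Qed.

Section JacobiTriple.
Context {R : comNzRingType}.

(* The q-binomial theorem at q := X^2, y := X^(2n), z := X turns this product into
   X^(3n^2) times the sum of [finite_jacobi]. *)
Lemma prod_jacobi n :
  \prod_(i < 2 * n) ('X^(2 * n) - 'X * ('X^2) ^+ i) =
  (-1) ^+ n * 'X^(3 * n ^ 2) * qpoch_odd 'X n ^+ 2 :> {poly R}.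
Proof.
rewrite mul2n -addnn big_split_ord /=.
have -> : \prod_(i < n) ('X^(n + n) - 'X * ('X^2) ^+ (n + i)) =
          \prod_(i < n) 'X^(n + n) * qpoch_odd 'X n :> {poly R}.
  rewrite /qpoch_odd -big_split; apply: eq_bigr => i _ /=.
  rewrite mulrBr mulr1 -exprM -exprS -exprD.
  by congr (_ - 'X^_); lia.
have -> : \prod_(i < n) ('X^(n + n) - 'X * ('X^2) ^+ i) =
          \prod_(i < n) (-1) * \prod_(i < n) 'X^(i.*2.+1) *
          \prod_(i < n) (1 - 'X^((n - i.+1).*2.+1)) :> {poly R}.
  rewrite -!big_split; apply: eq_bigr => i _ /=.
  rewrite mulN1r mulNr mulrBr mulr1 -exprM -exprS -exprD opprB.
  by congr ('X^_ - 'X^_); have := ltn_ord i; lia.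
have -> : \prod_(i < n) (1 - 'X^((n - i.+1).*2.+1)) = qpoch_odd 'X n :> {poly R}.
  rewrite /qpoch_odd (reindex_inj rev_ord_inj); apply: eq_bigr => i _ /=.
  by congr (1 - 'X^_); have := ltn_ord i; lia.
rewrite prodrXr sum_odd_nat !prodr_const card_ord -exprM.
have -> : (3 * n ^ 2 = n ^ 2 + (n + n) * n)%N by nia.
by rewrite exprD; ring.
Qed.

Lemma finite_jacobi n :
  \sum_(0 <= k < (2 * n).+1) (-1) ^+ k * 'X^(`|k - n| ^ 2) * gauss_binom ('X^2) (2 * n) k =
  (-1) ^+ n * qpoch_odd 'X n ^+ 2 :> {poly R}.
Proof.
apply: (monic_lreg (monicXn R (3 * n ^ 2))).
rewrite mulrCA mulrA -prod_jacobi q_binomial mulr_sumr.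
apply: eq_big_nat => k /andP[_ lt_k].
rewrite -!exprM mulrA [X in X * _]mulrCA -exprD -(jacobi_exponent lt_k).
by rewrite !exprD !mulrA.
Qed.

End JacobiTriple.

Lemma odd_distn (m n : nat) : odd `|m - n| = odd (m + n).
Proof.
rewrite oddD; have [le_mn|/ltnW le_nm] := leqP m n.
  by rewrite distnEr // oddB // addbC.
by rewrite distnEl // oddB.
Qed.

Lemma sqrn_even_mod4 t : ~~ odd t -> (t ^ 2 = 0 %[mod 4])%N.
Proof. by move=> /negbTE t_even; rewrite -[t]odd_double_half t_even -mul2n; nia. Qed.

Lemma sqrn_odd_mod8 t : odd t -> (t ^ 2 = 1 %[mod 8])%N.
Proof.
move=> t_odd; rewrite -[t]odd_double_half t_odd add1n; set s := t./2.
have [u su] : exists u, (s * s.+1 = u.*2)%N.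
  by exists (s * s.+1)./2; rewrite -[LHS]odd_double_half oddM /= andbN.
have -> : (s.*2.+1 ^ 2 = 1 + u * 8)%N by rewrite -!mul2n; nia.
by rewrite addnC modnMDl.
Qed.

Lemma sign_sqr (R : nzRingType) t : (-1) ^+ (t ^ 2) = (-1) ^+ t :> R.
Proof. by rewrite -signr_odd oddX /= signr_odd. Qed.

Section Theta.
Context {R : comNzRingType}.

Definition theta K : {poly R} := \sum_(j <- box K) 'X^(absz j ^ 2).
Definition theta_even K : {poly R} := \sum_(j <- box K | ~~ odd (absz j)) 'X^(absz j ^ 2).
Definition theta_odd K : {poly R} := \sum_(j <- box K | odd (absz j)) 'X^(absz j ^ 2).

Lemma big_box (F : nat -> {poly R}) K :
  \sum_(j <- box K) F (absz j) = \sum_(0 <= k < (2 * K).+1) F `|k - K|%N.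
Proof. by rewrite big_map /index_iota subn0. Qed.

Lemma big_boxS (F : nat -> {poly R}) K :
  \sum_(j <- box K.+1) F (absz j) = \sum_(j <- box K) F (absz j) + F K.+1 *+ 2.
Proof.
have distSS (a b : nat) : `|a.+1 - b.+1|%N = `|a - b|%N.
  by rewrite -[a.+1]addn1 -[b.+1]addn1 distnDr.
rewrite !big_box; have -> : ((2 * K.+1).+1 = (2 * K).+3)%N by lia.
rewrite big_nat_recl // big_nat_recr //= subn0 distSS.
have -> : `|(2 * K).+1 - K|%N = K.+1 by rewrite distnEl; lia.
by under eq_big_nat do rewrite distSS; rewrite addrCA -mulr2n.
Qed.

Lemma theta_split K : theta K = theta_even K + theta_odd K.
Proof. by rewrite /theta (bigID (fun j : int => odd (absz j))) addrC. Qed.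

Lemma Xn_compN n : 'X^n \Po - 'X = (-1) ^+ n * 'X^n :> {poly R}.
Proof. by rewrite comp_Xn_poly [LHS]exprNn. Qed.

Lemma theta_compN K : theta K \Po - 'X = theta_even K - theta_odd K.
Proof.
rewrite theta_split rmorphD /= /theta_even /theta_odd !rmorph_sum -sumrN.
congr (_ + _); apply: eq_bigr => j jP /=; rewrite Xn_compN sign_sqr -signr_odd.
  by rewrite (negbTE jP) expr0 mul1r.
by rewrite jP expr1 mulN1r.
Qed.

Lemma theta0 : theta 0 = 1.
Proof. by rewrite /theta (big_box (fun t => 'X^(t ^ 2))) big_nat1. Qed.

Lemma thetaS K : theta K.+1 = theta K + 'X^(K.+1 ^ 2) *+ 2.
Proof. exact: (big_boxS (fun t => 'X^(t ^ 2))). Qed.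

Lemma theta_compN_sum K : theta K \Po - 'X =
  (-1) ^+ K * \sum_(0 <= k < (2 * K).+1) (-1) ^+ k * 'X^(`|k - K| ^ 2).
Proof.
rewrite /theta (big_box (fun t => 'X^(t ^ 2))) rmorph_sum mulr_sumr.
apply: eq_bigr => k _ /=; rewrite Xn_compN sign_sqr -signr_odd odd_distn signr_odd.
by rewrite exprD; ring.
Qed.

Lemma theta_even_comp K : theta_even K = theta K./2 \Po 'X^4.
Proof.
pose F t : {poly R} := if ~~ odd t then 'X^(t ^ 2) else 0.
have -> : theta_even K = \sum_(j <- box K) F (absz j) by rewrite /theta_even big_mkcond.
elim: K => [|K IHK]; first by rewrite (big_box F) big_nat1 theta0 comp_polyC.
rewrite big_boxS IHK /= uphalf_half /F /=; case: (boolP (odd K)) => [K_odd|K_even] /=.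
  rewrite add1n thetaS rmorphD rmorphMn /= comp_Xn_poly -exprM.
  by congr (_ + 'X^_ *+ 2); rewrite -[in LHS](odd_double_half K) K_odd -mul2n; nia.
by rewrite mul0rn addr0.
Qed.

Lemma eq_upto_theta n K : (n <= K)%N -> eq_upto n (theta K) (theta n).
Proof.
elim: K => [|K IHK]; first by rewrite leqn0 => /eqP->.
rewrite leq_eqVlt ltnS => /orP[/eqP-> //|le_nK].
by rewrite thetaS IHK // eq_upto_Xn0 ?mul0rn ?addr0 //; nia.
Qed.

Lemma supp_theta_even K : supp_mod 4 0 (theta_even K).
Proof. by apply: supp_mod_sum => j /sqrn_even_mod4; apply: supp_modXn. Qed.

Lemma supp_theta_odd K : supp_mod 8 1 (theta_odd K).
Proof. by apply: supp_mod_sum => j /sqrn_odd_mod8; apply: supp_modXn. Qed.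

End Theta.

Section ThetaProduct.
Context {R : comNzRingType}.

Lemma eq_upto_qpoch n d a e : (n < d * e.+1)%N -> (e <= a)%N ->
  eq_upto n (qpoch ('X^d : {poly R}) a) (qpoch 'X^d e).
Proof.
move=> lt_n le_ea; elim: a le_ea => [|a IHa]; first by rewrite leqn0 => /eqP->.
rewrite leq_eqVlt ltnS => /orP[/eqP-> //|le_ea].
rewrite qpochS IHa // -exprM eq_upto_1subXn ?mulr1 //.
by rewrite (leq_trans lt_n) ?leq_mul2l ?ltnS ?le_ea ?orbT.
Qed.

Lemma coef0_qpoch d n : (0 < d)%N -> (qpoch ('X^d : {poly R}) n)`_0 = 1.
Proof.
move=> d_gt0; rewrite -horner_coef0 horner_prod big1 // => i _.
by rewrite hornerD hornerN hornerC -exprM hornerXn expr0n muln_eq0 gtn_eqF //= subr0.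
Qed.

(* Modulo X^(2e+2) every (X^2;X^2)_a with e <= a equals (X^2;X^2)_e, so [qpoch_gauss_binom]
   becomes (X^2;X^2)_e^2 g = (X^2;X^2)_e, and (X^2;X^2)_e cancels. *)
Lemma eq_upto_qpoch_gauss_binom K k e :
  (k <= 2 * K)%N -> (e <= k)%N -> (e <= 2 * K - k)%N ->
  eq_upto (2 * e).+1 (qpoch ('X^2 : {poly R}) K * gauss_binom 'X^2 (2 * K) k) 1.
Proof.
move=> le_k2K le_ek le_eKk; set g := gauss_binom _ _ _.
have trunc a : (e <= a)%N -> eq_upto (2 * e).+1 (qpoch ('X^2 : {poly R}) a) (qpoch 'X^2 e).
  by move=> le_ea; apply: eq_upto_qpoch => //; lia.
have binom : eq_upto (2 * e).+1
    (qpoch 'X^2 k * qpoch 'X^2 (2 * K - k)%N * g) (qpoch ('X^2 : {poly R}) (2 * K)%N).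
  by rewrite qpoch_gauss_binom.
rewrite (trunc k) // (trunc (2 * K - k)%N) // (trunc (2 * K)%N) ?(leq_trans le_ek) // in binom.
apply: (eq_upto_mulI (coef0_qpoch e (isT : 0 < 2)%N)).
by rewrite (trunc K) ?mulr1 ?mulrA //; lia.
Qed.

Lemma eq_upto_jacobi_term K k : (k <= 2 * K)%N ->
  eq_upto K ('X^(`|k - K| ^ 2) * (qpoch 'X^2 K * gauss_binom 'X^2 (2 * K) k))
            ('X^(`|k - K| ^ 2) : {poly R}).
Proof.
move=> le_k2K; set d := `|k - K|%N.
have [e [Ke ek eKk]] : exists e, [/\ K = (d + e)%N, e <= k & e <= 2 * K - k]%N.
  exists (K - d)%N; rewrite /d; case: (leqP k K) => h.
    by rewrite distnEr //; split; lia.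
  by rewrite distnEl ?(ltnW h) //; split; lia.
have := eq_upto_qpoch_gauss_binom le_k2K ek eKk.
move/(eq_upto_mulXn (d ^ 2)%N); rewrite mulr1; apply: eq_upto_le; nia.
Qed.

Theorem theta_compN_product K :
  eq_upto K (theta K \Po - 'X) (qpoch 'X^2 K * qpoch_odd 'X K ^+ 2 : {poly R}).
Proof.
have -> : qpoch 'X^2 K * qpoch_odd 'X K ^+ 2 =
          (-1) ^+ K * (qpoch 'X^2 K * ((-1) ^+ K * qpoch_odd ('X : {poly R}) K ^+ 2)).
  by rewrite [RHS]mulrCA signrMK.
rewrite theta_compN_sum -finite_jacobi !mulr_sumr; apply: eq_upto_sum => k.
rewrite mem_index_iota => /andP[_ le_k2K].
by rewrite [qpoch _ _ * _]mulrC -!mulrA [gauss_binom _ _ _ * _]mulrC eq_upto_jacobi_term.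
Qed.

End ThetaProduct.

Section ThetaIdentities.
Context {R : comNzRingType}.
Implicit Types p q s : {poly R}.

Lemma qpoch_comp p s n : qpoch p n \Po s = qpoch (p \Po s) n.
Proof. by rewrite rmorph_prod; apply: eq_bigr => i _ /=; rewrite rmorphB rmorph1 rmorphXn. Qed.

Lemma qpoch_odd_comp p s n : qpoch_odd p n \Po s = qpoch_odd (p \Po s) n.
Proof. by rewrite rmorph_prod; apply: eq_bigr => i _ /=; rewrite rmorphB rmorph1 rmorphXn. Qed.

Lemma eq_upto_qpoch_double d K : (0 < d)%N ->
  eq_upto K (qpoch ('X^d : {poly R}) K) (qpoch ('X^d ^+ 2) K * qpoch_odd 'X^d K).
Proof. by move=> d_gt0; rewrite -qpoch_double (@eq_upto_qpoch _ K d _ K) //; nia. Qed.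

Lemma theta_product K :
  eq_upto K (theta K : {poly R}) (qpoch 'X^2 K * qpoch_odd (- 'X) K ^+ 2).
Proof.
have := eq_upto_compN (theta_compN_product (R := R) K).
have XNN : (- 'X) \Po (- 'X) = 'X :> {poly R}.
  by rewrite -scaleN1r comp_polyZ comp_polyX !scaleN1r opprK.
rewrite -comp_polyA XNN comp_polyXr rmorphM rmorphXn /=.
by rewrite qpoch_comp qpoch_odd_comp comp_Xn_poly sqrrN comp_polyX.
Qed.

Lemma theta_mul_thetaN K :
  eq_upto K (theta K * (theta K \Po - 'X)) (((theta K \Po - 'X) \Po 'X^2) ^+ 2 : {poly R}).
Proof.
rewrite theta_compN_product theta_product rmorphM rmorphXn /= qpoch_comp qpoch_odd_comp.
rewrite comp_Xn_poly comp_polyX (eq_upto_qpoch_double K (isT : 0 < 2)%N) -qpoch_oddN.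
by apply: eq_eq_upto; ring.
Qed.

End ThetaIdentities.

Section Coefficients.
Context {R : comNzRingType}.

(* The generating series theta(q)^2 theta(q^2)^3 of r and the eta quotient
   theta(-q)^2 theta(-q^2)^3, with theta truncated to |n| <= K. *)
Definition r_gen K : {poly R} := theta K ^+ 2 * (theta K \Po 'X^2) ^+ 3.

Definition eta_gen K : {poly R} :=
  (theta K \Po - 'X) ^+ 2 * ((theta K \Po - 'X) \Po 'X^2) ^+ 3.

Lemma theta_comp_X2 K : theta K \Po 'X^2 = \sum_(j <- box K) 'X^(2 * absz j ^ 2) :> {poly R}.
Proof. by rewrite rmorph_sum; apply: eq_bigr => j _ /=; rewrite comp_Xn_poly -exprM mulnC. Qed.

Lemma quadQE a b c d e : quadQ a b c d e =
  (absz a ^ 2 + absz b ^ 2 + 2 * absz c ^ 2 + 2 * absz d ^ 2 + 2 * absz e ^ 2)%N%:Z.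
Proof.
have sqr_abs (x : int) : x ^+ 2 = (absz x ^ 2)%N%:Z.
  by rewrite -abszX abszE ger0_norm // sqr_ge0.
by rewrite /quadQ !sqr_abs !PoszD !PoszM.
Qed.

Lemma coef_r_gen_self n : (r n)%:R = (r_gen n)`_n :> R.
Proof.
have -> : r_gen n = theta n * (theta n * ((theta n \Po 'X^2) *
                      ((theta n \Po 'X^2) * ((theta n \Po 'X^2) * 1)))) by rewrite /r_gen; ring.
rewrite theta_comp_X2 /theta /r.
do 5 (rewrite natr_sum mulr_suml ?mulr_sumr coef_sum; apply: eq_bigr => ? _).
by rewrite mulr1 -!exprD coefXn quadQE eqz_nat eq_sym !addnA.
Qed.

Lemma coef_r_gen n K : (n <= K)%N -> (r n)%:R = (r_gen K)`_n :> R.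
Proof.
move=> le_nK; have trunc : eq_upto n (r_gen K) (r_gen n) by rewrite /r_gen (eq_upto_theta le_nK).
by rewrite coef_r_gen_self (eq_upto_coef trunc).
Qed.

Lemma coef_twist_odd (E O A B : {poly R}) n :
  supp_mod 4 0 E -> supp_mod 4 1 O -> supp_mod 4 0 A -> supp_mod 4 2 B -> odd n ->
  ((E - O) ^+ 2 * (A - B))`_n =
  (if (n %% 4 == 1)%N then -1 else 1) * ((E + O) ^+ 2 * (A + B))`_n.
Proof.
move=> sE sO sA sB n_odd; set S := E ^+ 2 + O ^+ 2.
have -> : (E + O) ^+ 2 * (A + B) = S * (A + B) + E * O * A *+ 2 + E * O * B *+ 2.
  by rewrite /S; ring.
have -> : (E - O) ^+ 2 * (A - B) = S * (A - B) - E * O * A *+ 2 + E * O * B *+ 2.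
  by rewrite /S; ring.
have dvd24 : (2 %| 4)%N by [].
have sS : supp_mod 2 0 S.
  apply: supp_modD; first exact: supp_mod_dvd dvd24 (supp_modX 2 sE).
  exact: supp_mod_dvd dvd24 (supp_modX 2 sO).
have sA2 : supp_mod 2 0 A := supp_mod_dvd dvd24 sA.
have sB2 : supp_mod 2 2 B := supp_mod_dvd dvd24 sB.
have n_mod2 : (n != 0 %[mod 2])%N by rewrite modn2 n_odd.
rewrite !coefD coefN !coefMn (supp_modM sS (supp_modD sA2 sB2)) //.
rewrite (supp_modM sS (supp_modB sA2 sB2)) //.
have sEOA : supp_mod 4 1 (E * O * A) := supp_modM (supp_modM sE sO) sA.
have sEOB : supp_mod 4 3 (E * O * B) := supp_modM (supp_modM sE sO) sB.
have [n1|n3] : (n %% 4 = 1 \/ n %% 4 = 3)%N by move: n_mod2; rewrite modn2 -modn_mod; lia.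
  by rewrite n1 /= (sEOB n) ?n1 //; ring.
by rewrite n3 /= (sEOA n) ?n3 //; ring.
Qed.

Lemma coef_comp_X2_double n m P Q W V : (2 * m <= n)%N -> supp_mod 2 1 Q ->
  eq_upto n P (W \Po 'X^2 + Q) -> (P * (V \Po 'X^2))`_(2 * m) = (W * V)`_m :> R.
Proof.
move=> le_mn sQ PWQ.
have -> : (P * (V \Po 'X^2))`_(2 * m) = ((W \Po 'X^2 + Q) * (V \Po 'X^2))`_(2 * m).
  by apply: eq_upto_coef le_mn; rewrite PWQ.
rewrite mulrDl coefD (supp_modM sQ (supp_mod_comp_Xn0 V (isT : 0 < 2)%N)); last first.
  by rewrite addn0 modnMr.
by rewrite -rmorphM coef_comp_poly_Xn // dvdn_mulr // mulKn // addr0.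
Qed.

Definition eo_coef K a b m : R := (theta_even K ^+ a * theta_odd K ^+ b)`_m.

End Coefficients.

Section EvenOddParts.
Context {R : comNzRingType}.
Variable K : nat.
Local Notation E := (theta_even K : {poly R}).
Local Notation O := (theta_odd K : {poly R}).
Local Notation sE := (theta_even K \Po 'X^2 : {poly R}).
Local Notation sO := (theta_odd K \Po 'X^2 : {poly R}).

Lemma supp_theta_even_comp : supp_mod 8 0 sE.
Proof. exact: (supp_mod_comp_Xn (isT : 0 < 2)%N (supp_theta_even K)). Qed.

Lemma supp_theta_odd_comp : supp_mod 16 2 sO.
Proof. exact: (supp_mod_comp_Xn (isT : 0 < 2)%N (supp_theta_odd K)). Qed.

Let sE4 : supp_mod 4 0 sE := supp_mod_dvd (isT : 4 %| 8)%N supp_theta_even_comp.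
Let sO4 : supp_mod 4 2 sO := supp_mod_dvd (isT : 4 %| 16)%N supp_theta_odd_comp.
Let O4 : supp_mod 4 1 O := supp_mod_dvd (isT : 4 %| 8)%N (supp_theta_odd K).

Lemma theta_even_odd_sqr :
  eq_upto K (E ^+ 2) (sE ^+ 2 + sO ^+ 2) /\ eq_upto K (O ^+ 2) (sE * sO *+ 2).
Proof.
have h : eq_upto K (E ^+ 2 + - O ^+ 2) ((sE ^+ 2 + sO ^+ 2) + - (sE * sO *+ 2)).
  have -> : E ^+ 2 + - O ^+ 2 = (E + O) * (E - O) by ring.
  have -> : sE ^+ 2 + sO ^+ 2 + - (sE * sO *+ 2) = (sE - sO) ^+ 2 by ring.
  by rewrite -rmorphB -theta_compN -theta_split theta_mul_thetaN.
have [] := eq_upto_supp_mod (isT : 0 != 2 %[mod 4])%N _ _ _ _ h.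
- exact: (supp_modX 2 (supp_theta_even K)).
- by apply: supp_modD; [exact: (supp_modX 2 sE4) | exact: (supp_modX 2 sO4)].
- exact/supp_modN/(supp_modX 2 O4).
- exact/supp_modN/supp_modMn/(supp_modM sE4 sO4).
by move=> -> hO; split=> //; rewrite -[O ^+ 2]opprK hO opprK.
Qed.

Lemma theta_sqr_even_part :
  eq_upto K (E ^+ 2 + O ^+ 2) (theta K ^+ 2 \Po 'X^2 : {poly R}).
Proof.
have [-> ->] := theta_even_odd_sqr.
by rewrite rmorphXn /= theta_split rmorphD; apply: eq_eq_upto; ring.
Qed.

Lemma coef_eta_gen_odd n : odd n ->
  (eta_gen K)`_n = (if (n %% 4 == 1)%N then -1 else 1) * (r_gen K)`_n :> R.
Proof.
move=> n_odd; set A := sE ^+ 3 + sE * sO ^+ 2 *+ 3; set B := sE ^+ 2 * sO *+ 3 + sO ^+ 3.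
have -> : r_gen K = (E + O) ^+ 2 * (A + B).
  by rewrite /r_gen theta_split rmorphD /A /B; ring.
have -> : eta_gen K = (E - O) ^+ 2 * (A - B).
  by rewrite /eta_gen theta_compN rmorphB /A /B; ring.
apply: coef_twist_odd => //; first exact: supp_theta_even.
- rewrite /A; apply: supp_modD; first exact (supp_modX 3 sE4).
  exact/supp_modMn/(supp_modM sE4 (supp_modX 2 sO4)).
rewrite /B; apply: supp_modD; last exact (supp_modX 3 sO4).
exact/supp_modMn/(supp_modM (supp_modX 2 sE4) sO4).
Qed.

Lemma coef_gen_double m : (2 * m <= K)%N ->
  (r_gen K : {poly R})`_(2 * m) = (theta K ^+ 5)`_m /\
  (eta_gen K : {poly R})`_(2 * m) = (theta K ^+ 2 * (theta K \Po - 'X) ^+ 3)`_m.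
Proof.
move=> le_mK; have sEO : supp_mod 2 1 (E * O *+ 2).
  apply/supp_modMn/(supp_modM (supp_mod_dvd (isT : 2 %| 4)%N (supp_theta_even K))).
  exact: supp_mod_dvd (isT : 2 %| 8)%N (supp_theta_odd K).
have [hE hO] := theta_even_odd_sqr.
split.
  rewrite /r_gen -[(theta K \Po 'X^2) ^+ 3]rmorphXn [theta K ^+ 5](exprD _ 2 3).
  apply: coef_comp_X2_double le_mK sEO _.
  by rewrite -theta_sqr_even_part theta_split; apply: eq_eq_upto; ring.
rewrite /eta_gen -[((theta K \Po - 'X) \Po 'X^2) ^+ 3]rmorphXn.
apply: coef_comp_X2_double le_mK (supp_modN sEO) _.
by rewrite -theta_sqr_even_part theta_compN; apply: eq_eq_upto; ring.
Qed.

Local Notation M a b m := (eo_coef K a b m : R).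

Lemma coef_theta_pow5 m : (theta K ^+ 5)`_m =
  M 5 0 m + M 4 1 m *+ 5 + M 3 2 m *+ 10 + M 2 3 m *+ 10 + M 1 4 m *+ 5 + M 0 5 m.
Proof.
rewrite theta_split /eo_coef.
have -> : (E + O) ^+ 5 = E ^+ 5 * O ^+ 0 + E ^+ 4 * O ^+ 1 *+ 5 + E ^+ 3 * O ^+ 2 *+ 10
  + E ^+ 2 * O ^+ 3 *+ 10 + E ^+ 1 * O ^+ 4 *+ 5 + E ^+ 0 * O ^+ 5 by ring.
by rewrite !(coefD, coefMn).
Qed.

Lemma coef_theta2_thetaN3 m : (theta K ^+ 2 * (theta K \Po - 'X) ^+ 3)`_m =
  M 5 0 m - M 4 1 m - M 3 2 m *+ 2 + M 2 3 m *+ 2 + M 1 4 m - M 0 5 m.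
Proof.
rewrite theta_compN theta_split /eo_coef.
have -> : (E + O) ^+ 2 * (E - O) ^+ 3 = E ^+ 5 * O ^+ 0 - E ^+ 4 * O ^+ 1 - E ^+ 3 * O ^+ 2 *+ 2
  + E ^+ 2 * O ^+ 3 *+ 2 + E ^+ 1 * O ^+ 4 - E ^+ 0 * O ^+ 5 by ring.
by rewrite !(coefD, coefN, coefMn).
Qed.

Lemma eo_coef_eq0 a b m : (m != b %[mod 4])%N -> M a b m = 0.
Proof.
have := supp_modM (supp_modX a (supp_theta_even K)) (supp_modX b O4).
by rewrite muln0 muln1 add0n; apply.
Qed.

Lemma eo_coef05_eq0 m : (m != 5 %[mod 8])%N -> M 0 5 m = 0.
Proof. by rewrite /eo_coef expr0 mul1r; apply: (supp_modX 5 (supp_theta_odd K)). Qed.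

(* O^5 = 4 E(q^2)^2 O(q^2)^2 O and E^4 O = (E(q^2)^4 + O(q^2)^4) O + 2 E(q^2)^2 O(q^2)^2 O,
   and the first summand of the latter lives on exponents = 1 (mod 8). *)
Lemma eo_coef05 m : (m <= K)%N -> (m = 5 %[mod 8])%N -> M 0 5 m = M 4 1 m *+ 2.
Proof.
move=> le_mK m5; have [hE hO] := theta_even_odd_sqr.
rewrite /eo_coef expr0 mul1r expr1.
have -> : (O ^+ 5)`_m = (sE ^+ 2 * sO ^+ 2 * O *+ 4)`_m.
  apply: eq_upto_coef le_mK; rewrite (_ : O ^+ 5 = (O ^+ 2) ^+ 2 * O) ?hO; last by ring.
  by apply: eq_eq_upto; ring.
have -> : (E ^+ 4 * O)`_m = ((sE ^+ 4 + sO ^+ 4) * O + sE ^+ 2 * sO ^+ 2 * O *+ 2)`_m.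
  apply: eq_upto_coef le_mK; rewrite (_ : E ^+ 4 = (E ^+ 2) ^+ 2) ?hE; last by ring.
  by apply: eq_eq_upto; ring.
have sO8 : supp_mod 8 2 sO := supp_mod_dvd (isT : 8 %| 16)%N supp_theta_odd_comp.
have s4 : supp_mod 8 0 (sE ^+ 4 + sO ^+ 4).
  by apply: supp_modD; [exact (supp_modX 4 supp_theta_even_comp) | exact (supp_modX 4 sO8)].
have z : ((sE ^+ 4 + sO ^+ 4) * O)`_m = 0.
  by apply: (supp_modM s4 (supp_theta_odd K)); rewrite m5.
by rewrite [in RHS]coefD z add0r !coefMn -mulrnA.
Qed.

Lemma eo_coef50 j : (4 * j <= K)%N -> M 5 0 (4 * j) = (theta K ^+ 5)`_j.
Proof.
move=> le_jK; rewrite /eo_coef expr0 mulr1 theta_even_comp -rmorphXn /=.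
rewrite coef_comp_poly_Xn // dvdn_mulr // mulKn //.
have le_jK2 : (j <= K./2)%N by rewrite -divn2; lia.
have le_jK1 : (j <= K)%N by lia.
by apply: eq_upto_coef (leqnn j); rewrite (eq_upto_theta le_jK2) (eq_upto_theta le_jK1).
Qed.

Local Notation T5 m := ((theta K ^+ 5 : {poly R})`_m).
Local Notation T23 m := ((theta K ^+ 2 * (theta K \Po - 'X) ^+ 3 : {poly R})`_m).

Lemma coef_theta_mod4_0 m : (m = 0 %[mod 4])%N ->
  T5 m = M 5 0 m + M 1 4 m *+ 5 /\ T23 m = M 5 0 m + M 1 4 m.
Proof.
move=> m0; rewrite coef_theta_pow5 coef_theta2_thetaN3.
rewrite (@eo_coef_eq0 4 1) ?(@eo_coef_eq0 3 2) ?(@eo_coef_eq0 2 3) ?eo_coef05_eq0;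
  try lia.
by split; ring.
Qed.

Lemma coef_theta_mod4_1 m : (m = 1 %[mod 4])%N ->
  T5 m = M 4 1 m *+ 5 + M 0 5 m /\ T23 m = - M 4 1 m - M 0 5 m.
Proof.
move=> m1; rewrite coef_theta_pow5 coef_theta2_thetaN3.
rewrite (@eo_coef_eq0 5 0) ?(@eo_coef_eq0 3 2) ?(@eo_coef_eq0 2 3) ?(@eo_coef_eq0 1 4);
  try lia.
by split; ring.
Qed.

Lemma coef_theta_mod4_2 m : (m = 2 %[mod 4])%N ->
  T5 m = M 3 2 m *+ 10 /\ T23 m = - (M 3 2 m *+ 2).
Proof.
move=> m2; rewrite coef_theta_pow5 coef_theta2_thetaN3.
rewrite (@eo_coef_eq0 5 0) ?(@eo_coef_eq0 4 1) ?(@eo_coef_eq0 2 3) ?(@eo_coef_eq0 1 4)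
  ?(@eo_coef_eq0 0 5); try lia.
by split; ring.
Qed.

Lemma coef_theta_mod4_3 m : (m = 3 %[mod 4])%N ->
  T5 m = M 2 3 m *+ 10 /\ T23 m = M 2 3 m *+ 2.
Proof.
move=> m3; rewrite coef_theta_pow5 coef_theta2_thetaN3.
rewrite (@eo_coef_eq0 5 0) ?(@eo_coef_eq0 4 1) ?(@eo_coef_eq0 3 2) ?(@eo_coef_eq0 1 4)
  ?(@eo_coef_eq0 0 5); try lia.
by split; ring.
Qed.

End EvenOddParts.

Lemma eq_upto_qpoch_geom (R : comNzRingType) N :
  eq_upto N (qpoch ('X^2 ^+ 2) N * \prod_(i < N) \sum_(k < N.+1) 'X^(4 * i.+1 * k))
            (1 : {poly R}).
Proof.
rewrite /qpoch -big_split /= -[X in eq_upto _ _ X](big1_eq (op := *%R) (index_enum 'I_N) xpredT).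
apply: eq_upto_prod => i /=.
rewrite -!exprM (_ : (2 * 2 * i.+1 = 4 * i.+1)%N) //.
under eq_bigr do rewrite exprM.
rewrite -opprB mulNr -subrX1 opprB -exprM eq_upto_1subXn //; nia.
Qed.

Lemma eta_quot_truncE N : eta_quot_trunc N =
  qpoch 'X N ^+ 4 * qpoch 'X^2 N ^+ 4 * (\prod_(i < N) \sum_(k < N.+1) 'X^(4 * i.+1 * k)) ^+ 3.
Proof.
rewrite /eta_quot_trunc big_add1 /= big_mkord !big_split /= -/(qpoch 'X N).
rewrite (_ : \prod_(i < N) (1 - 'X^(2 * i.+1)) = qpoch 'X^2 N); first by ring.
by apply: eq_bigr => i _; rewrite exprM.
Qed.

Lemma eq_upto_eta_quot_trunc N : eq_upto N (eta_quot_trunc N) (eta_gen N).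
Proof.
rewrite eta_quot_truncE /eta_gen theta_compN_product rmorphM rmorphXn /=.
rewrite qpoch_comp qpoch_odd_comp comp_Xn_poly comp_polyX.
have qpochX : eq_upto N (qpoch 'X N) (qpoch 'X^2 N * qpoch_odd ('X : {poly rat}) N).
  by have := eq_upto_qpoch_double (R := rat) N (isT : 0 < 1)%N; rewrite expr1.
rewrite qpochX (eq_upto_qpoch_double N (isT : 0 < 2)%N).
set D := \prod_(i < N) _; set c := qpoch _ N; set so := qpoch_odd _ N; set o := qpoch_odd _ N.
have -> : (c * so * o) ^+ 4 * (c * so) ^+ 4 * D ^+ 3 =
          (c * D) ^+ 3 * (c ^+ 5 * so ^+ 8 * o ^+ 4) by ring.
by rewrite eq_upto_qpoch_geom expr1n mul1r; apply: eq_eq_upto; ring.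
Qed.

Lemma rhs_coef_odd N : odd N ->
  rhs_coef N = (if (N %% 4 == 1)%N then -1 else 1) * (r N)%:R.
Proof.
move=> N_odd; have N2 : (N %% 2 = 1)%N by rewrite modn2 N_odd.
rewrite /rhs_coef; case: ifP => [_|/negbT N1]; first by rewrite mulN1r.
by rewrite ifT ?mul1r //; apply/eqP; lia.
Qed.

Lemma rhs_coef_double m : rhs_coef (2 * m) =
  if (m %% 4 == 0)%N then 1 / 5 * ((r (2 * m))%:R + 4 * (r (2 * m %/ 4))%:R)
  else if (m %% 8 == 5)%N then - (3 / 7) * (r (2 * m))%:R
  else if (m %% 4 == 3)%N then 1 / 5 * (r (2 * m))%:R
  else - (1 / 5) * (r (2 * m))%:R.
Proof.
have e16 : ((2 * m) %% 16 = 2 * (m %% 8))%N by rewrite muln_modr.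
have e8 : ((2 * m) %% 8 = 2 * (m %% 4))%N by rewrite muln_modr.
have e4 : ((2 * m) %% 4 = 2 * (m %% 2))%N by rewrite muln_modr.
have m4 : (m %% 4 = m %% 8 %% 4)%N by rewrite modn_dvdm.
have m2 : (m %% 2 = m %% 8 %% 2)%N by rewrite modn_dvdm.
rewrite /rhs_coef e16 e8 e4 m4 m2.
by case: (m %% 8)%N (ltn_pmod m (isT : 0 < 8)%N) => [|[|[|[|[|[|[|[|c]]]]]]]].
Qed.

Lemma coef_eta_gen_double K m : (2 * m <= K)%N ->
  (eta_gen K)`_(2 * m) =
  if (m %% 4 == 0)%N then 1 / 5 * ((r_gen K)`_(2 * m) + 4 * (r_gen K)`_(2 * m %/ 4))
  else if (m %% 8 == 5)%N then - (3 / 7) * (r_gen K)`_(2 * m)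
  else if (m %% 4 == 3)%N then 1 / 5 * (r_gen K)`_(2 * m)
  else - (1 / 5) * (r_gen K)`_(2 * m) :> rat.
Proof.
move=> le_mK; have [-> ->] := coef_gen_double (R := rat) le_mK.
case m4: (m %% 4)%N (ltn_pmod m (isT : 0 < 4)%N) => [|[|[|[|//]]]] _ /=.
- have [j mE] : exists j, m = (4 * j)%N by exists (m %/ 4)%N; lia.
  have le_jK : (2 * j <= K)%N by lia.
  have [rj _] := coef_gen_double (R := rat) le_jK.
  rewrite (_ : (2 * m %/ 4 = 2 * j)%N) ?rj -?(@eo_coef50 rat K j) -?mE; try lia.
  by have [-> ->] := coef_theta_mod4_0 (R := rat) K m4; field.
- have [-> ->] := coef_theta_mod4_1 (R := rat) K m4.
  case: eqP => [m5|/eqP m5]; last by rewrite eo_coef05_eq0 //; field.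
  by rewrite eo_coef05 ?m5 //; [field | lia].
- rewrite ifF; last by apply/eqP; lia.
  by have [-> ->] := coef_theta_mod4_2 (R := rat) K m4; field.
rewrite ifF; last by apply/eqP; lia.
by have [-> ->] := coef_theta_mod4_3 (R := rat) K m4; field.
Qed.

Theorem lemma6p2 (N : nat) : eta_quot_coef N = rhs_coef N.
Proof.
rewrite /eta_quot_coef (eq_upto_coef (eq_upto_eta_quot_trunc N) (leqnn N)).
have [N_odd | N_even] := boolP (odd N).
  by rewrite coef_eta_gen_odd // rhs_coef_odd // -coef_r_gen.
have [m ->] : exists m, N = (2 * m)%N.
  by exists N./2; rewrite -[LHS]odd_double_half (negbTE N_even) mul2n.
by rewrite coef_eta_gen_double // rhs_coef_double -!coef_r_gen ?leq_div.
Qed.
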